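(* Let $\epsilon>0$ and $t_n=n(\log n)^{3/4}$. Then $$\lambda\left(\sum_{i=1}^n a_i\,\mathbb 1_{\{t_n\le a_i\le \epsilon n\log n\}}\ge 3\epsilon\, n\log n\ \text{for infinitely many } n\right)=0.$$
   Context: Let $\lambda$ be Lebesgue measure on $[0,1)$, $\tau(x)=2x\bmod1$, $\chi(x)=\lfloor1/x\rfloor$ (with $\chi(0)=\infty$), $a_n=\chi\circ\tau^{n-1}$. Logarithms are natural. *)

From Stdlib Require Import Reals ZArith.
Open Scope R_scope.

Definition tau (x : R) : R := frac_part (2 * x).

(* chi(x) = floor(1/x), with chi(0) = infinity (encoded as None). *)
Definition chi (x : R) : option nat :=
  if Req_EM_T x 0 then None else Some (Z.to_nat (Int_part (1 / x))).

Definition a (n : nat) (x : R) : option nat := chi (Nat.iter (n - 1) tau x).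

Definition t_seq (n : nat) : R := INR n * Rpower (ln (INR n)) (3 / 4).

(* a_i * 1_{lo <= a_i <= hi}; an infinite digit contributes 0 (it never lies
   in the finite window). *)
Definition trunc_term (lo hi : R) (d : option nat) : R :=
  match d with
  | None => 0
  | Some k => if Rle_dec lo (INR k) then
                if Rle_dec (INR k) hi then INR k else 0
              else 0
  end.

Definition Strunc (eps : R) (n : nat) (x : R) : R :=
  match n with
  | O => 0
  | S m => sum_f_R0 (fun j => trunc_term (t_seq n) (eps * INR n * ln (INR n))
                                  (a (j + 1) x)) m
  end.

Definition lebesgue_null (A : R -> Prop) : Prop :=
  forall delta : R, 0 < delta ->
  exists lo hi : nat -> R,
    (forall k, lo k <= hi k) /\
    (forall x, A x -> exists k, lo k < x < hi k) /\
    (forall m, sum_f_R0 (fun k => hi k - lo k) m <= delta).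

From Stdlib Require Import Reals Lra Lia ZArith List Classical Wf_nat.
Open Scope R_scope.

(* If the truncated sum at time n reaches 3M, M = eps n log n, then two counted digits
   a_(i+1), a_(j+1) with i < j < n and 2^(j-i) >= t_n exist.  Otherwise, after the first
   counted digit d the orbit only doubles (tau^i x <= 1/t_n, so no wrap-around) up to every
   later counted digit, these digits decay geometrically from 1/tau^i x < d + 1, and the
   sum stays below 2(d + 1) <= 3M.  Both tau^i x and tau^j x are then at most a = 1/t_n, and
   for fixed i < j this set is a union of dyadic intervals of total length <= 2 a^2.  On the
   block 2^k <= n < 2^(k+1) one has t_n >= 2^k (k/2)^(3/4), so the union over the 4^(k+1)
   pairs (i, j) has length <= 8 (k/2)^(-3/2), which is summable in k: Borel-Cantelli. *)

Lemma frac_part_id z : 0 <= z < 1 -> frac_part z = z.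
Proof.
  intros Hz. destruct (Int_part_frac_part_spec z 0 z Hz) as [_ E]; [simpl; ring|].
  now symmetry.
Qed.

Lemma frac_part_double_frac z : frac_part (2 * frac_part z) = frac_part (2 * z).
Proof.
  pose proof (base_fp (2 * frac_part z)) as [H1 H2].
  destruct (Int_part_frac_part_spec (2 * z) (2 * Int_part z + Int_part (2 * frac_part z))%Z
              (frac_part (2 * frac_part z))) as [_ E]; [lra | | exact E].
  rewrite plus_IZR, mult_IZR.
  pose proof (Rplus_Int_part_frac_part z).
  pose proof (Rplus_Int_part_frac_part (2 * frac_part z)).
  simpl (IZR 2). lra.
Qed.

Lemma Int_part_nonneg z : 0 <= z -> (0 <= Int_part z)%Z.
Proof.
  intros Hz. pose proof (base_Int_part z) as [B1 B2].
  destruct (Z_lt_le_dec (Int_part z) 0) as [h|h]; [|exact h].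
  apply Z.lt_le_pred, IZR_le in h. simpl in h. lra.
Qed.

Lemma INR_Int_part z : 0 <= z -> INR (Z.to_nat (Int_part z)) = IZR (Int_part z).
Proof. intros Hz. now rewrite INR_IZR_INZ, Z2Nat.id by (now apply Int_part_nonneg). Qed.

Lemma le_Int_part (r : nat) z : INR r <= z -> (r <= Z.to_nat (Int_part z))%nat.
Proof.
  intros Hr. pose proof (base_Int_part z) as [_ B].
  enough (Z.of_nat r <= Int_part z)%Z by lia.
  apply Z.lt_succ_r, lt_IZR. rewrite succ_IZR, <- INR_IZR_INZ. lra.
Qed.

Lemma pow2_INR k : INR (2 ^ k) = 2 ^ k.
Proof. rewrite pow_INR. now replace (INR 2) with 2 by (simpl; ring). Qed.

Lemma tau_range z : 0 <= tau z < 1.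
Proof. unfold tau. pose proof (base_fp (2 * z)). lra. Qed.

Lemma iter_tau_range x j : 0 <= x < 1 -> 0 <= Nat.iter j tau x < 1.
Proof. intros Hx. destruct j; [exact Hx | apply tau_range]. Qed.

Lemma iter_tau_frac y r : 0 <= y < 1 -> Nat.iter r tau y = frac_part (2 ^ r * y).
Proof.
  intros Hy. induction r as [|r IH]; simpl Nat.iter.
  - now rewrite Rmult_1_l, frac_part_id.
  - rewrite IH. unfold tau. rewrite frac_part_double_frac. f_equal. simpl; ring.
Qed.

Lemma iter_tau_digits y r : 0 <= y < 1 ->
  exists p, (p < 2 ^ r)%nat /\ 2 ^ r * y = INR p + Nat.iter r tau y.
Proof.
  intros Hy. assert (Hpos : 0 <= 2 ^ r * y) by (apply Rmult_le_pos; [apply pow_le|]; lra).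
  exists (Z.to_nat (Int_part (2 ^ r * y))).
  assert (E : 2 ^ r * y = INR (Z.to_nat (Int_part (2 ^ r * y))) + Nat.iter r tau y).
  { rewrite iter_tau_frac, INR_Int_part by assumption. apply Rplus_Int_part_frac_part. }
  split; [|exact E].
  apply INR_lt. rewrite pow2_INR.
  pose proof (iter_tau_range y r Hy).
  assert (2 ^ r * y < 2 ^ r * 1) by (apply Rmult_lt_compat_l; [apply pow_lt|]; lra).
  lra.
Qed.

Lemma iter_tau_no_wrap y r : 0 <= y -> 2 ^ r * y < 1 -> Nat.iter r tau y = 2 ^ r * y.
Proof.
  intros Hy. induction r as [|r IH]; intros Hr; simpl Nat.iter; [ring|].
  assert (0 <= 2 ^ r * y) by (apply Rmult_le_pos; [apply pow_le|]; lra).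
  simpl in Hr. rewrite IH by lra. unfold tau.
  rewrite frac_part_id; [simpl; ring | lra].
Qed.

Lemma trunc_term_chi_spec T M y : 0 < T -> 0 <= y ->
  trunc_term T M (chi y) = 0 \/
  (0 < y <= / T /\ T <= trunc_term T M (chi y) <= M /\
   trunc_term T M (chi y) <= / y < trunc_term T M (chi y) + 1).
Proof.
  intros HT Hy. unfold trunc_term, chi.
  destruct (Req_EM_T y 0) as [|Hy0]; [now left|].
  assert (Hinv : 0 <= 1 / y) by (left; apply Rdiv_lt_0_compat; lra).
  pose proof (base_Int_part (1 / y)) as [B1 B2].
  rewrite INR_Int_part by exact Hinv.
  destruct Rle_dec; [destruct Rle_dec|]; [right | now left ..].
  unfold Rdiv in *. rewrite Rmult_1_l in *.
  assert (y <= / T) by (rewrite <- (Rinv_inv y); apply Rinv_le_contravar; lra).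
  repeat split; lra.
Qed.

Lemma sum_shifted_geometric_le c i m : 0 <= c ->
  sum_f_R0 (fun j => if (j <? i)%nat then 0 else c * (/ 2) ^ (j - i)) m <= 2 * c.
Proof.
  intros Hc.
  enough (sum_f_R0 (fun j => if (j <? i)%nat then 0 else c * (/ 2) ^ (j - i)) m
            <= 2 * c - 2 * c * (/ 2) ^ (S m - i)).
  { assert (0 <= 2 * c * (/ 2) ^ (S m - i)) by (apply Rmult_le_pos; [lra | apply pow_le; lra]).
    lra. }
  induction m as [|m IH].
  - simpl. destruct i; simpl; lra.
  - rewrite tech5. destruct (S m <? i)%nat eqn:E.
    + apply Nat.ltb_lt in E.
      replace (S (S m) - i)%nat with 0%nat by lia. replace (S m - i)%nat with 0%nat in IH by lia.
      lra.
    + apply Nat.ltb_ge in E.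
      replace (S (S m) - i)%nat with (S (S m - i)) by lia. rewrite <- tech_pow_Rmult. lra.
Qed.

Lemma trunc_term_after_small_iterate T M y r : 0 < y <= / T -> 2 ^ r < T ->
  trunc_term T M (chi (Nat.iter r tau y)) <= / y * (/ 2) ^ r.
Proof.
  intros Hy Hr.
  assert (HT : 0 < T) by (pose proof (pow_lt 2 r); lra).
  assert (Pr : 0 < 2 ^ r) by (apply pow_lt; lra).
  assert (Hsmall : 2 ^ r * y < 1).
  { apply Rle_lt_trans with (2 ^ r * / T); [apply Rmult_le_compat_l; lra|].
    apply Rmult_lt_reg_r with T; [lra|]. rewrite Rmult_assoc, Rinv_l; lra. }
  rewrite iter_tau_no_wrap by lra.
  assert (0 < / y * (/ 2) ^ r) by (apply Rmult_lt_0_compat; [apply Rinv_0_lt_compat | apply pow_lt]; lra).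
  destruct (trunc_term_chi_spec T M (2 ^ r * y)) as [-> | (_ & _ & Hle & _)]; [lra | nra | lra |].
  rewrite Rinv_mult, <- pow_inv in Hle. lra.
Qed.

Lemma large_truncated_sum_far_small_iterates x T M m :
  0 <= x < 1 -> 0 < T -> 2 <= M ->
  sum_f_R0 (fun j => trunc_term T M (chi (Nat.iter j tau x))) m >= 3 * M ->
  exists i j, (i < j <= m)%nat /\ Nat.iter i tau x <= / T /\
              Nat.iter j tau x <= / T /\ T <= 2 ^ (j - i).
Proof.
  intros Hx HT HM Hsum. apply NNPP; intros Near.
  set (Y j := Nat.iter j tau x) in *.
  set (term j := trunc_term T M (chi (Y j))) in *.
  change (sum_f_R0 term m >= 3 * M) in Hsum.
  assert (Hterm : forall j, term j = 0 \/
            (0 < Y j <= / T /\ T <= term j <= M /\ term j <= / Y j < term j + 1))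
    by (intros j; exact (trunc_term_chi_spec T M (Y j) HT (proj1 (iter_tau_range x j Hx)))).
  destruct (classic (exists j, (j <= m)%nat /\ term j <> 0)) as [Hex | Hnone].
  2:{ assert (sum_f_R0 term m <= sum_f_R0 (fun _ => 0) m).
      { apply sum_Rle. intros j Hj. destruct (Hterm j) as [-> | (_ & HTj & _)]; [lra|].
        exfalso. apply Hnone. exists j. split; [exact Hj | lra]. }
      rewrite sum_cte in H. lra. }
  destruct (dec_inh_nat_subset_has_unique_least_element _ (fun j => classic _) Hex)
    as [i0 [[[Hi0 Hnz] Hleast] _]].
  destruct (Hterm i0) as [? | (Hy0 & HM0 & Hd0)]; [contradiction|].
  set (c := / Y i0).
  assert (Hbound : forall j, (j <= m)%nat ->
            term j <= if (j <? i0)%nat then 0 else c * (/ 2) ^ (j - i0)).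
  { intros j Hj. destruct (Hterm j) as [Ej | (Hyj & HTj & _)].
    { rewrite Ej. destruct (j <? i0)%nat; [lra|].
      apply Rmult_le_pos; [left; apply Rinv_0_lt_compat; lra | apply pow_le; lra]. }
    destruct (j <? i0)%nat eqn:Lt.
    { apply Nat.ltb_lt in Lt. assert (i0 <= j)%nat by (apply Hleast; split; [exact Hj | lra]). lia. }
    apply Nat.ltb_ge in Lt. destruct (Nat.eq_dec j i0) as [-> | Ne].
    { rewrite Nat.sub_diag. unfold c. simpl. lra. }
    assert (Hshort : 2 ^ (j - i0) < T).
    { apply Rnot_le_lt. intros Hfar. apply Near. exists i0, j.
      repeat split; [lia | exact Hj | exact (proj2 Hy0) | exact (proj2 Hyj) | exact Hfar]. }
    assert (Ej : Y j = Nat.iter (j - i0) tau (Y i0)).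
    { unfold Y. rewrite <- Nat.iter_add. f_equal. lia. }
    unfold term. rewrite Ej. now apply trunc_term_after_small_iterate. }
  assert (sum_f_R0 term m <= 2 * c).
  { eapply Rle_trans; [apply sum_Rle; exact Hbound|].
    apply sum_shifted_geometric_le. left; apply Rinv_0_lt_compat; lra. }
  unfold c in *. lra.
Qed.

Definition len (iv : R * R) : R := snd iv - fst iv.

Definition total_length (l : list (R * R)) : R := fold_right (fun iv s => len iv + s) 0 l.

Definition valid_intervals (l : list (R * R)) : Prop := forall iv, In iv l -> fst iv <= snd iv.

Definition covered_by (l : list (R * R)) (x : R) : Prop :=
  exists iv, In iv l /\ fst iv <= x <= snd iv.

Lemma total_length_app l1 l2 : total_length (l1 ++ l2) = total_length l1 + total_length l2.
Proof. induction l1 as [|iv l1 IH]; simpl; [ring | rewrite IH; ring]. Qed.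

Lemma total_length_nonneg l : valid_intervals l -> 0 <= total_length l.
Proof.
  induction l as [|iv l IH]; intros Hl; simpl; [lra|].
  assert (fst iv <= snd iv) by (apply Hl; now left).
  assert (0 <= total_length l) by (apply IH; intros iv' Hin; apply Hl; now right).
  unfold len. lra.
Qed.

Lemma total_length_const l c : (forall iv, In iv l -> len iv = c) ->
  total_length l = INR (length l) * c.
Proof.
  induction l as [|iv l IH]; intros Hl; cbn [total_length fold_right length]; [simpl; ring|].
  fold (total_length l). rewrite IH, (Hl iv) by (now left || (intros; apply Hl; now right)).
  rewrite S_INR. ring.
Qed.

Lemma total_length_flat_map_le {A : Type} (f : A -> list (R * R)) l B :
  (forall e, In e l -> total_length (f e) <= B) ->
  total_length (flat_map f l) <= INR (length l) * B.
Proof.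
  induction l as [|e l IH]; intros Hl; cbn [flat_map length]; [simpl; lra|].
  rewrite total_length_app, S_INR.
  assert (total_length (f e) <= B) by (apply Hl; now left).
  assert (total_length (flat_map f l) <= INR (length l) * B) by (apply IH; intros; apply Hl; now right).
  lra.
Qed.

(** The intervals [[p/2^j, (p+a)/2^j]] for the [p < 2^j] whose last [j - i] binary digits
    form a number at most [a 2^(j-i)]. *)
Definition dyadic_pair_intervals (i j : nat) (a : R) : list (R * R) :=
  flat_map (fun q => map (fun r => (INR (q * 2 ^ (j - i) + r) / 2 ^ j,
                                   (INR (q * 2 ^ (j - i) + r) + a) / 2 ^ j))
                      (seq 0 (S (Z.to_nat (Int_part (a * 2 ^ (j - i)))))))
           (seq 0 (2 ^ i)).

Lemma valid_dyadic_pair_intervals i j a : 0 <= a -> valid_intervals (dyadic_pair_intervals i j a).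
Proof.
  intros Ha iv Hin. apply in_flat_map in Hin as [q [_ Hin]].
  apply in_map_iff in Hin as [r [<- _]]. simpl.
  unfold Rdiv. apply Rmult_le_compat_r; [left; apply Rinv_0_lt_compat, pow_lt|]; lra.
Qed.

Lemma total_length_dyadic_pair_intervals i j a : (i <= j)%nat -> 0 <= a ->
  1 <= a * 2 ^ (j - i) -> total_length (dyadic_pair_intervals i j a) <= 2 * a * a.
Proof.
  intros Hij Ha Hm. unfold dyadic_pair_intervals.
  assert (Pi : 0 < 2 ^ i) by (apply pow_lt; lra).
  assert (Pm : 0 < 2 ^ (j - i)) by (apply pow_lt; lra).
  assert (E : 2 ^ j = 2 ^ i * 2 ^ (j - i)) by (rewrite <- pow_add; f_equal; lia).
  rewrite (total_length_const _ (a / 2 ^ j)).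
  2:{ intros iv Hin. apply in_flat_map in Hin as [q [_ Hin]].
      apply in_map_iff in Hin as [r [<- _]]. unfold len. cbn [fst snd].
      field. apply pow_nonzero. lra. }
  rewrite (flat_map_constant_length (c := S (Z.to_nat (Int_part (a * 2 ^ (j - i)))))).
  2:{ intros q _. now rewrite length_map, length_seq. }
  rewrite length_seq, mult_INR, pow2_INR, S_INR, INR_Int_part by (apply Rmult_le_pos; lra).
  pose proof (base_Int_part (a * 2 ^ (j - i))) as [B _].
  rewrite E.
  replace (2 ^ i * (IZR (Int_part (a * 2 ^ (j - i))) + 1) * (a / (2 ^ i * 2 ^ (j - i))))
    with ((IZR (Int_part (a * 2 ^ (j - i))) + 1) * a / 2 ^ (j - i)) by (field; lra).
  apply Rmult_le_reg_r with (2 ^ (j - i)); [lra|].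
  unfold Rdiv. rewrite Rmult_assoc, Rinv_l by lra. nra.
Qed.

Lemma covered_dyadic_pair_intervals x i j a : 0 <= x < 1 -> (i <= j)%nat ->
  Nat.iter i tau x <= a -> Nat.iter j tau x <= a -> covered_by (dyadic_pair_intervals i j a) x.
Proof.
  intros Hx Hij Hi Hj.
  set (m := (j - i)%nat).
  assert (Ej : Nat.iter j tau x = Nat.iter m tau (Nat.iter i tau x)).
  { rewrite <- Nat.iter_add. f_equal. unfold m. lia. }
  pose proof (iter_tau_range x i Hx) as Ri. pose proof (iter_tau_range x j Hx) as Rj.
  destruct (iter_tau_digits x i Hx) as [q [Hq Eq]].
  destruct (iter_tau_digits (Nat.iter i tau x) m Ri) as [r [Hr Er]].
  rewrite <- Ej in Er.
  assert (Pm : 0 < 2 ^ m) by (apply pow_lt; lra).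
  assert (Pj : 0 < 2 ^ j) by (apply pow_lt; lra).
  assert (E2 : 2 ^ j = 2 ^ m * 2 ^ i) by (rewrite <- pow_add; f_equal; unfold m; lia).
  assert (Ex : 2 ^ j * x = INR (q * 2 ^ m + r) + Nat.iter j tau x).
  { rewrite plus_INR, mult_INR, pow2_INR, E2, Rmult_assoc, Eq. nra. }
  assert (Hra : INR r <= a * 2 ^ m) by nra.
  exists (INR (q * 2 ^ m + r) / 2 ^ j, (INR (q * 2 ^ m + r) + a) / 2 ^ j). split.
  - apply in_flat_map. exists q. split; [apply in_seq; lia|].
    apply in_map_iff. exists r. split; [reflexivity|].
    apply in_seq. pose proof (le_Int_part r _ Hra). fold m. lia.
  - simpl. split; apply Rmult_le_reg_l with (2 ^ j); try lra; unfold Rdiv;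
      rewrite <- Rmult_assoc, Rinv_r_simpl_m; lra.
Qed.

Definition block_threshold (k : nat) : R := 2 ^ k * Rpower (INR k / 2) (3 / 4).

Definition block_intervals (k : nat) : list (R * R) :=
  flat_map (fun i => flat_map (fun j =>
      if (i <? j)%nat then
        if Rle_dec (block_threshold k) (2 ^ (j - i))
        then dyadic_pair_intervals i j (/ block_threshold k) else nil
      else nil)
    (seq 0 (2 ^ S k))) (seq 0 (2 ^ S k)).

Lemma block_threshold_pos k : 0 < block_threshold k.
Proof. apply Rmult_lt_0_compat; [apply pow_lt; lra | apply exp_pos]. Qed.

Lemma block_threshold_le_t_seq k n : (1 <= k)%nat -> (2 ^ k <= n)%nat ->
  block_threshold k <= t_seq n.
Proof.
  intros Hk Hn.
  assert (H2 : 2 ^ k <= INR n) by (rewrite <- pow2_INR; now apply le_INR).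
  assert (H1 : 1 <= INR k) by (now apply (le_INR 1)).
  assert (Hln : INR k / 2 <= ln (INR n)).
  { apply Rle_trans with (ln (2 ^ k)).
    - rewrite ln_pow by lra. pose proof ln_lt_2.
      assert (INR k * / 2 <= INR k * ln 2) by (apply Rmult_le_compat_l; lra). lra.
    - destruct H2 as [H2 | ->]; [left; apply ln_increasing; [apply pow_lt|]; lra | lra]. }
  apply Rmult_le_compat; [apply pow_le; lra | left; apply exp_pos | exact H2 |].
  apply Rle_Rpower_l; lra.
Qed.

Lemma valid_block_intervals k : valid_intervals (block_intervals k).
Proof.
  intros iv Hin. apply in_flat_map in Hin as [i [_ Hin]]. apply in_flat_map in Hin as [j [_ Hin]].
  destruct (i <? j)%nat; [destruct Rle_dec|]; try contradiction.
  revert iv Hin. apply valid_dyadic_pair_intervals.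
  left. apply Rinv_0_lt_compat, block_threshold_pos.
Qed.

Lemma total_length_block_intervals k : (1 <= k)%nat ->
  total_length (block_intervals k) <= 8 / (INR k / 2 * sqrt (INR k / 2)).
Proof.
  intros Hk. set (a := / block_threshold k).
  pose proof (block_threshold_pos k) as HT.
  assert (Ha : 0 < a) by (apply Rinv_0_lt_compat; lra).
  eapply Rle_trans.
  { unfold block_intervals. apply total_length_flat_map_le. intros i _.
    apply total_length_flat_map_le with (B := 2 * a * a). intros j _.
    destruct (i <? j)%nat eqn:E; [destruct Rle_dec as [Hfar|]|]; try (simpl; nra).
    apply Nat.ltb_lt in E. apply total_length_dyadic_pair_intervals; [lia | lra |].
    unfold a. apply Rmult_le_reg_l with (block_threshold k); [lra|].
    rewrite <- Rmult_assoc, Rinv_r; lra. }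
  set (y := INR k / 2).
  assert (Hy : 0 < y) by (unfold y; pose proof (le_INR 1 k Hk); simpl in *; lra).
  assert (P : Rpower y (3 / 4) * Rpower y (3 / 4) = y * sqrt y).
  { rewrite <- Rpower_plus. replace (3 / 4 + 3 / 4) with (1 + / 2) by field.
    now rewrite Rpower_plus, Rpower_1, Rpower_sqrt. }
  assert (0 < Rpower y (3 / 4)) by apply exp_pos.
  assert (0 < 2 ^ k) by (apply pow_lt; lra).
  rewrite length_seq, pow2_INR, <- P. unfold a, block_threshold. fold y.
  right. simpl. field. lra.
Qed.

Definition tail_bound (k : nat) : R := / sqrt (INR k / 2).

Lemma tail_bound_nonneg k : 0 <= tail_bound k.
Proof.
  unfold tail_bound. destruct (Req_dec (sqrt (INR k / 2)) 0) as [E|E].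
  - rewrite E, Rinv_0. lra.
  - left. apply Rinv_0_lt_compat. pose proof (sqrt_pos (INR k / 2)). lra.
Qed.

Lemma inv_pow_three_halves_le_telescope k : (2 <= k)%nat ->
  8 / (INR k / 2 * sqrt (INR k / 2)) <= 32 * (tail_bound (k - 1) - tail_bound k).
Proof.
  intros Hk. unfold tail_bound.
  set (y := INR k / 2). set (y1 := INR (k - 1) / 2).
  assert (Ey : y = y1 + / 2) by (unfold y, y1; rewrite minus_INR by lia; simpl; field).
  assert (Hy1 : 1 / 2 <= y1) by (pose proof (le_INR 2 k Hk); simpl in *; unfold y in Ey; lra).
  set (A := sqrt y1). set (B := sqrt y).
  assert (HA : 0 < A) by (apply sqrt_lt_R0; lra).
  assert (HB : 0 < B) by (apply sqrt_lt_R0; lra).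
  assert (AA : A * A = y1) by (apply sqrt_sqrt; lra).
  assert (BB : B * B = y) by (apply sqrt_sqrt; lra).
  assert (AB : A <= B) by (apply sqrt_le_1_alt; lra).
  assert (key : A <= 4 * (B * B) * (B - A)).
  { assert ((B - A) * (A + B) = 1 / 2) by nra. nra. }
  rewrite <- BB.
  apply Rmult_le_reg_r with (A * (B * B * B)); [apply Rmult_lt_0_compat; nra|].
  replace (8 / (B * B * B) * (A * (B * B * B))) with (8 * A) by (field; lra).
  replace (32 * (/ A - / B) * (A * (B * B * B))) with (32 * (B * B) * (B - A)) by (field; lra).
  nra.
Qed.

Lemma Strunc_S eps m x : Strunc eps (S m) x =
  sum_f_R0 (fun j => trunc_term (t_seq (S m)) (eps * INR (S m) * ln (INR (S m)))
                                (chi (Nat.iter j tau x))) m.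
Proof. apply sum_eq. intros j _. unfold a. do 3 f_equal. lia. Qed.

Lemma covered_block_intervals eps k n x : 0 <= x < 1 -> (1 <= k)%nat ->
  (2 ^ k <= n < 2 ^ S k)%nat -> 2 <= eps * INR n * ln (INR n) ->
  Strunc eps n x >= 3 * eps * INR n * ln (INR n) -> covered_by (block_intervals k) x.
Proof.
  intros Hx Hk [Hn1 Hn2] HM HS.
  destruct n as [|m]; [pose proof (Nat.pow_nonzero 2 k); lia|].
  rewrite Strunc_S in HS.
  pose proof (block_threshold_le_t_seq k (S m) Hk Hn1) as Ht.
  pose proof (block_threshold_pos k) as HT.
  destruct (large_truncated_sum_far_small_iterates x (t_seq (S m)) _ m Hx ltac:(lra) HM
              ltac:(lra)) as [i [j [Hij [Hi [Hj Hfar]]]]].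
  assert (Ha : / t_seq (S m) <= / block_threshold k) by (apply Rinv_le_contravar; lra).
  destruct (covered_dyadic_pair_intervals x i j (/ block_threshold k) Hx ltac:(lia)
              ltac:(lra) ltac:(lra)) as [iv [Hin Hiv]].
  exists iv. split; [|exact Hiv].
  apply in_flat_map. exists i. split; [apply in_seq; simpl in *; lia|].
  apply in_flat_map. exists j. split; [apply in_seq; simpl in *; lia|].
  replace (i <? j)%nat with true by (symmetry; apply Nat.ltb_lt; lia).
  destruct Rle_dec; [exact Hin | lra].
Qed.

Lemma sum_len_nth_le l M : valid_intervals l ->
  sum_f_R0 (fun m => len (nth m l (0, 0))) M <= total_length l.
Proof.
  revert M. induction l as [|iv l IH]; intros M Hl.
  - assert (sum_f_R0 (fun m => len (nth m nil (0, 0))) M <= sum_f_R0 (fun _ => 0) M).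
    { apply sum_Rle. intros [|m] _; unfold len; simpl; lra. }
    rewrite sum_cte, Rmult_0_l in H. exact H.
  - assert (Hv : valid_intervals l) by (intros iv' Hin; apply Hl; now right).
    assert (Hiv : 0 <= len iv) by (unfold len; pose proof (Hl iv (or_introl eq_refl)); lra).
    pose proof (total_length_nonneg l Hv).
    destruct M as [|M].
    + change (len iv <= len iv + total_length l). lra.
    + rewrite decomp_sum by lia.
      change (len iv + sum_f_R0 (fun m => len (nth m l (0, 0))) M <= len iv + total_length l).
      specialize (IH M Hv). lra.
Qed.

Section Enumeration.

Variable blocks : nat -> list (R * R).
Hypothesis blocks_nonempty : forall k, blocks k <> nil.
Hypothesis blocks_valid : forall k, valid_intervals (blocks k).

Fixpoint blocks_upto (K : nat) : list (R * R) :=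
  match K with
  | O => blocks 0
  | S K' => blocks_upto K' ++ blocks (S K')
  end.

(** Since every block is nonempty, the [m]-th interval is already present at stage [m]. *)
Definition enum_blocks (m : nat) : R * R := nth m (blocks_upto m) (0, 0).

Lemma blocks_upto_prefix K K' : (K <= K')%nat -> exists r, blocks_upto K' = blocks_upto K ++ r.
Proof.
  induction 1 as [|K' _ [r E]]; [exists nil; now rewrite app_nil_r|].
  exists (r ++ blocks (S K')). simpl. now rewrite E, app_assoc.
Qed.

Lemma nth_blocks_upto_le K K' p : (K <= K')%nat -> (p < length (blocks_upto K))%nat ->
  nth p (blocks_upto K') (0, 0) = nth p (blocks_upto K) (0, 0).
Proof. intros HK Hp. destruct (blocks_upto_prefix K K' HK) as [r ->]. now apply app_nth1. Qed.

Lemma length_blocks_upto K : (S K <= length (blocks_upto K))%nat.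
Proof.
  induction K as [|K IH]; simpl.
  - destruct (blocks 0) eqn:E; [now elim (blocks_nonempty 0%nat) | simpl; lia].
  - rewrite length_app. destruct (blocks (S K)) eqn:E; [now elim (blocks_nonempty (S K)) | simpl; lia].
Qed.

Lemma valid_blocks_upto K : valid_intervals (blocks_upto K).
Proof.
  induction K as [|K IH]; simpl; [apply blocks_valid|].
  intros iv Hin. apply in_app_or in Hin as [Hin | Hin]; [now apply IH | now apply (blocks_valid (S K))].
Qed.

Lemma total_length_blocks_upto K :
  total_length (blocks_upto K) = sum_f_R0 (fun k => total_length (blocks k)) K.
Proof. induction K as [|K IH]; simpl; [reflexivity|]. now rewrite total_length_app, IH. Qed.

Lemma enum_blocks_valid m : fst (enum_blocks m) <= snd (enum_blocks m).
Proof. apply (valid_blocks_upto m), nth_In. pose proof (length_blocks_upto m). lia. Qed.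

Lemma enum_blocks_surjective k iv : In iv (blocks k) -> exists p, enum_blocks p = iv.
Proof.
  intros Hin.
  assert (Hin' : In iv (blocks_upto k)) by (destruct k; simpl; [easy | apply in_or_app; now right]).
  destruct (In_nth _ _ (0, 0) Hin') as [p [Hp <-]].
  exists p. unfold enum_blocks. destruct (Nat.le_gt_cases p k) as [Hle | Hgt].
  - symmetry. apply nth_blocks_upto_le; [exact Hle|]. pose proof (length_blocks_upto p). lia.
  - apply nth_blocks_upto_le; [lia | exact Hp].
Qed.

Lemma sum_len_enum_blocks M :
  sum_f_R0 (fun m => len (enum_blocks m)) M <= sum_f_R0 (fun k => total_length (blocks k)) M.
Proof.
  rewrite <- total_length_blocks_upto.
  eapply Rle_trans; [|apply (sum_len_nth_le _ M (valid_blocks_upto M))].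
  right. apply sum_eq. intros m Hm. unfold enum_blocks.
  rewrite (nth_blocks_upto_le m M m Hm); [reflexivity|]. pose proof (length_blocks_upto m). lia.
Qed.

End Enumeration.

Lemma sum_double_geometric_le delta M : 0 < delta ->
  sum_f_R0 (fun m => 2 * (delta / 8 * (/ 2) ^ m)) M <= delta / 2.
Proof.
  intros Hd.
  replace (sum_f_R0 (fun m => 2 * (delta / 8 * (/ 2) ^ m)) M)
    with (delta / 4 * sum_f_R0 (fun m => (/ 2) ^ m) M)
    by (rewrite scal_sum; apply sum_eq; intros; field).
  rewrite tech3 by lra.
  assert (0 < (/ 2) ^ S M) by (apply pow_lt; lra).
  replace ((1 - (/ 2) ^ S M) / (1 - / 2)) with (2 - 2 * (/ 2) ^ S M) by field.
  nra.
Qed.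

Lemma lebesgue_null_of_interval_covers (A : R -> Prop) (L : nat -> list (R * R)) :
  (forall k, valid_intervals (L k)) ->
  (forall eta, 0 < eta -> exists k0,
     forall K, sum_f_R0 (fun k => total_length (L (k0 + k)%nat)) K <= eta) ->
  (forall x, A x -> forall k0, exists k, (k0 <= k)%nat /\ covered_by (L k) x) ->
  lebesgue_null A.
Proof.
  intros Hval Htail Hcov delta Hd.
  destruct (Htail (delta / 2)) as [k0 Hk0]; [lra|].
  set (blocks k := (0, 0) :: L (k0 + k)%nat).
  assert (Hne : forall k, blocks k <> nil) by easy.
  assert (Hvb : forall k, valid_intervals (blocks k)).
  { intros k iv [<- | Hin]; [simpl; lra | now apply (Hval (k0 + k)%nat)]. }
  set (I := enum_blocks blocks).
  set (w m := delta / 8 * (/ 2) ^ m).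
  assert (Hw : forall m, 0 < w m) by (intros; apply Rmult_lt_0_compat; [lra | apply pow_lt; lra]).
  exists (fun m => fst (I m) - w m), (fun m => snd (I m) + w m). split; [|split].
  - intros m. pose proof (enum_blocks_valid blocks Hne Hvb m). pose proof (Hw m). unfold I. lra.
  - intros x Hx. destruct (Hcov x Hx k0) as [k [Hk [iv [Hin Hiv]]]].
    destruct (enum_blocks_surjective blocks Hne (k - k0) iv) as [p Ep].
    { right. now replace (k0 + (k - k0))%nat with k by lia. }
    exists p. fold I in Ep. rewrite Ep. pose proof (Hw p). lra.
  - intros M.
    replace (sum_f_R0 (fun m => snd (I m) + w m - (fst (I m) - w m)) M)
      with (sum_f_R0 (fun m => len (I m)) M + sum_f_R0 (fun m => 2 * w m) M)
      by (rewrite <- plus_sum; apply sum_eq; intros; unfold len; ring).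
    pose proof (sum_len_enum_blocks blocks Hne Hvb M) as Hlen.
    replace (sum_f_R0 (fun k => total_length (blocks k)) M)
      with (sum_f_R0 (fun k => total_length (L (k0 + k)%nat)) M) in Hlen.
    2:{ apply sum_eq. intros k _.
        change (total_length (L (k0 + k)%nat) = len (0, 0) + total_length (L (k0 + k)%nat)).
        unfold len. simpl. ring. }
    pose proof (Hk0 M). pose proof (sum_double_geometric_le delta M Hd).
    unfold I, w in *. lra.
Qed.

Lemma sum_telescope (u : nat -> R) n K :
  sum_f_R0 (fun k => u (n + k)%nat - u (S (n + k))) K = u n - u (S (n + K)).
Proof.
  induction K as [|K IH]; simpl; [rewrite Nat.add_0_r; ring|].
  rewrite IH. replace (n + S K)%nat with (S (n + K)) by lia. ring.
Qed.

Lemma block_intervals_tail_small eta : 0 < eta ->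
  exists k0, forall K, sum_f_R0 (fun k => total_length (block_intervals (k0 + k))) K <= eta.
Proof.
  intros Heta.
  destruct (INR_unbounded (Rmax 1 (2 * ((32 / eta) * (32 / eta))))) as [n Hn].
  pose proof (Rmax_l 1 (2 * ((32 / eta) * (32 / eta)))).
  pose proof (Rmax_r 1 (2 * ((32 / eta) * (32 / eta)))).
  assert (Hn1 : (1 <= n)%nat) by (apply INR_le; simpl; lra).
  assert (Htb : 32 * tail_bound n <= eta).
  { unfold tail_bound.
    assert (H32 : 0 < 32 / eta) by (apply Rdiv_lt_0_compat; lra).
    assert (Hs : 32 / eta <= sqrt (INR n / 2)).
    { rewrite <- (sqrt_Rsqr (32 / eta)) by lra. apply sqrt_le_1_alt. unfold Rsqr. lra. }
    assert (/ sqrt (INR n / 2) <= / (32 / eta)) by (apply Rinv_le_contravar; lra).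
    replace (/ (32 / eta)) with (eta / 32) in H1 by (field; lra). lra. }
  exists (S n). intros K.
  apply Rle_trans with (sum_f_R0 (fun k => 32 * (tail_bound (n + k) - tail_bound (S (n + k)))) K).
  - apply sum_Rle. intros k _.
    replace (n + k)%nat with (S (n + k) - 1)%nat at 1 by lia.
    eapply Rle_trans; [apply total_length_block_intervals; lia|].
    apply inv_pow_three_halves_le_telescope. lia.
  - replace (sum_f_R0 (fun k => 32 * (tail_bound (n + k) - tail_bound (S (n + k)))) K)
      with (32 * sum_f_R0 (fun k => tail_bound (n + k) - tail_bound (S (n + k))) K)
      by (rewrite scal_sum; apply sum_eq; intros; ring).
    rewrite sum_telescope.
    pose proof (tail_bound_nonneg (S (n + K))). lra.
Qed.

Lemma two_le_truncation_level eps n K : 0 < eps -> 2 / eps <= INR K ->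
  (K <= n)%nat -> (3 <= n)%nat -> 2 <= eps * INR n * ln (INR n).
Proof.
  intros Heps HK HKn Hn3.
  assert (Hn : 2 / eps <= INR n) by (pose proof (le_INR _ _ HKn); lra).
  assert (Hln : 1 <= ln (INR n)).
  { rewrite <- ln_exp with 1. pose proof exp_le_3. pose proof (le_INR _ _ Hn3).
    destruct (Rle_lt_or_eq_dec (exp 1) (INR n)) as [Hlt | ->]; [simpl in *; lra | | lra].
    left. apply ln_increasing; [apply exp_pos | exact Hlt]. }
  assert (2 <= eps * INR n).
  { apply Rmult_le_compat_l with (r := eps) in Hn; [|lra].
    replace (eps * (2 / eps)) with 2 in Hn by (field; lra). exact Hn. }
  nra.
Qed.

Theorem mainTheorem6 (eps : R) (heps : 0 < eps) :
  lebesgue_null (fun x => 0 <= x < 1 /\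
    forall N : nat, exists n : nat, (N <= n)%nat /\
      Strunc eps n x >= 3 * eps * INR n * ln (INR n)).
Proof.
  apply lebesgue_null_of_interval_covers with (L := block_intervals).
  - exact valid_block_intervals.
  - exact block_intervals_tail_small.
  - intros x [Hx Hinf] k0.
    destruct (INR_unbounded (2 / eps)) as [K HK].
    destruct (Hinf (2 ^ (k0 + K + 2))%nat) as [n [Hn HS]].
    pose proof (Nat.pow_gt_lin_r 2 (k0 + K + 2) ltac:(lia)).
    assert (Hpos : (0 < n)%nat) by lia.
    assert (Hk : (k0 + K + 2 <= Nat.log2 n)%nat) by (now apply Nat.log2_le_pow2).
    exists (Nat.log2 n). split; [lia|].
    apply (covered_block_intervals eps _ n x Hx); [lia | now apply Nat.log2_spec | | exact HS].
    apply (two_le_truncation_level eps n K heps); lra || lia.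
Qed.
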